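(* Consider the network system $\mathbf{\Sigma}$ and, for a given clustering matrix $\Pi\in\mathbb{R}^{n\times r}$, the reduced network system $\hat{\mathbf{\Sigma}}$ (both described in the context). If the scalars $\alpha,\beta$ satisfy $\alpha\beta=\mathbf{tr}(\hat{E})/\mathbf{tr}(E)$, then the error system $\mathbf{\Sigma_e}=\mathbf{\Sigma}-\hat{\mathbf{\Sigma}}$ is BIBO stable for all $\hat{W}\in\mathbb{D}_{++}^{|\hat{\mathcal{E}}|}$ and all $\hat{E}\in\mathbb{D}_{++}^{r}$.
   Context: $\mathbb{D}_{++}^k$ denotes the set of $k\times k$ diagonal matrices with positive diagonal entries; $\mathbf{1}_k$ is the all-ones vector of length $k$. Let $\mathcal{G}$ be a simple, undirected, connected graph with node set $\{1,\dots,n\}$ and $|\mathcal{E}|$ edges, each edge labeled and given an arbitrary orientation. Its incidence matrix $D\in\mathbb{R}^{n\times|\mathcal{E}|}$ has $[D]_{il}=+1$ if edge $l$ is directed from node $i$, $-1$ if edge $l$ is directed towards node $i$, and $0$ otherwise. Let $W\in\mathbb{D}_{++}^{|\mathcal{E}|}$ (edge weights), $E\in\mathbb{D}_{++}^{n}$ (nodal time-scales), $L=DWD^T$, $F\in\mathbb{R}^{n\times p}$, $H\in\mathbb{R}^{q\times n}$. The network system $\mathbf{\Sigma}$ is $E\dot{x}=-Lx+Fu$, $y=Hx$, with transfer function $\mathbf{\Sigma}(s)=H(sI_n+E^{-1}L)^{-1}E^{-1}F$. A clustering is a partition of $\{1,\dots,n\}$ into $r$ nonempty disjoint clusters $\mathcal{C}_1,\dots,\mathcal{C}_r$,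 with characteristic matrix $\Pi\in\mathbb{R}^{n\times r}$, $[\Pi]_{ij}=1$ if $i\in\mathcal{C}_j$ and $0$ otherwise. The reduced incidence matrix $\hat{D}\in\mathbb{R}^{r\times|\hat{\mathcal{E}}|}$ is obtained from $\Pi^TD$ by removing all zero columns and all duplicate columns. For $\hat{W}\in\mathbb{D}_{++}^{|\hat{\mathcal{E}}|}$, $\hat{E}\in\mathbb{D}_{++}^{r}$ and scalars $\alpha,\beta$, set $\hat{L}=\hat{D}\hat{W}\hat{D}^T$, $\hat{F}=\Pi^TF$, $\hat{H}=H\Pi$; the reduced system $\hat{\mathbf{\Sigma}}$ is $\hat{E}\dot{\hat{x}}=-\hat{L}\hat{x}+\beta\hat{F}u$, $\hat{y}=\alpha\hat{H}\hat{x}$, with transfer function $\hat{\mathbf{\Sigma}}(s)=\alpha\hat{H}(sI_r+\hat{E}^{-1}\hat{L})^{-1}\beta\hat{E}^{-1}\hat{F}$. The error system $\mathbf{\Sigma_e}$ has transfer function $\mathbf{\Sigma}(s)-\hat{\mathbf{\Sigma}}(s)$ (realized by the block-diagonal state matrix $\mathrm{diag}(-E^{-1}L,-\hat{E}^{-1}\hat{L})$, input matrix $[E^{-1}F;\beta\hat{E}^{-1}\hat{F}]$ and output matrix $[H,\,-\alpha\hat{H}]$). BIBO stable means all poles of the transfer function have negative real part. *)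

From HB Require Import structures.
From mathcomp Require Import all_boot all_order all_algebra.
From mathcomp Require Import reals.
From mathcomp.real_closed Require Import complex.
Set Implicit Arguments. Unset Strict Implicit. Unset Printing Implicit Defensive.
Import Order.TTheory GRing.Theory Num.Theory.
Local Open Scope ring_scope.
Local Open Scope complex_scope.

Section Defs.
Variable R : realType.
Local Notation C := R[i].

(* A graph on nodes 'I_n with m labeled, oriented edges: edge l goes from
   (e l).1 to (e l).2. *)
Definition incidence (n m : nat) (e : 'I_m -> 'I_n * 'I_n) : 'M[R]_(n, m) :=
  \matrix_(i < n, l < m)
     (if i == (e l).1 then 1 else if i == (e l).2 then -1 else 0).

Definition simple_graph (n m : nat) (e : 'I_m -> 'I_n * 'I_n) : Prop :=
  (forall l, (e l).1 != (e l).2) /\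
  (forall l l', (e l = e l' \/ e l = ((e l').2, (e l').1)) -> l = l').

Definition adj (n m : nat) (e : 'I_m -> 'I_n * 'I_n) : rel 'I_n :=
  fun i j => [exists l, (e l == (i, j)) || (e l == (j, i))].

Definition connected_graph (n m : nat) (e : 'I_m -> 'I_n * 'I_n) : Prop :=
  forall i j : 'I_n, connect (adj e) i j.

Definition posdiag (k : nat) (A : 'M[R]_k) : Prop :=
  (forall i j, i != j -> A i j = 0) /\ (forall i, 0 < A i i).

(* a clustering into r nonempty clusters: node i lies in cluster c i *)
Definition clustering (n r : nat) (c : 'I_n -> 'I_r) : Prop :=
  forall j : 'I_r, exists i : 'I_n, c i = j.

Definition char_mx (n r : nat) (c : 'I_n -> 'I_r) : 'M[R]_(n, r) :=
  \matrix_(i < n, j < r) (c i == j)%:R.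

Definition red_cols (n r m : nat) (Pi : 'M[R]_(n, r)) (D : 'M[R]_(n, m))
  : seq 'cV[R]_r :=
  undup [seq col l (Pi^T *m D) | l <- enum 'I_m & col l (Pi^T *m D) != 0].

Definition red_incidence (n r m : nat) (Pi : 'M[R]_(n, r)) (D : 'M[R]_(n, m))
  : 'M[R]_(r, size (red_cols Pi D)) :=
  \matrix_(i < r, k < size (red_cols Pi D)) (nth 0 (red_cols Pi D) k) i ord0.

Definition cmx (a b : nat) (A : 'M[R]_(a, b)) : 'M[C]_(a, b) :=
  map_mx (fun x => x%:C) A.

(* transfer function of xdot = A x + B u, y = Cm x :  Cm (sI - A)^{-1} B,
   defined on the points s where sI - A is invertible *)
Definition tf (k p q : nat) (A : 'M[R]_k) (B : 'M[R]_(k, p)) (Cm : 'M[R]_(q, k))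
  (s : C) : 'M[C]_(q, p) :=
  cmx Cm *m invmx (s%:M - cmx A) *m cmx B.

Definition tf_dom (k : nat) (A : 'M[R]_k) (s : C) : bool :=
  (s%:M - cmx A) \in unitmx.

(* A matrix-valued rational function G, given on a (cofinite) domain dom, is
   regular at s0 if every entry coincides on dom with a fraction a/b of
   polynomials whose denominator does not vanish at s0; a pole is a point
   where G is not regular. *)
Definition regular_at (p q : nat) (dom : C -> bool) (G : C -> 'M[C]_(q, p))
  (s0 : C) : Prop :=
  forall (i : 'I_q) (j : 'I_p), exists a b : {poly C},
    b.[s0] != 0 /\ forall s, dom s -> G s i j * b.[s] = a.[s].

Definition is_pole (p q : nat) (dom : C -> bool) (G : C -> 'M[C]_(q, p))
  (s0 : C) : Prop := ~ regular_at dom G s0.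

Definition BIBO_stable (p q : nat) (dom : C -> bool) (G : C -> 'M[C]_(q, p))
  : Prop := forall s0, is_pole dom G s0 -> Re s0 < 0.

Definition Sigma_tf (n m p q : nat) (D : 'M[R]_(n, m)) (W : 'M[R]_m)
  (E : 'M[R]_n) (F : 'M[R]_(n, p)) (H : 'M[R]_(q, n)) : C -> 'M[C]_(q, p) :=
  tf (- (invmx E *m (D *m W *m D^T))) (invmx E *m F) H.

Definition Sigma_dom (n m : nat) (D : 'M[R]_(n, m)) (W : 'M[R]_m)
  (E : 'M[R]_n) : C -> bool :=
  tf_dom (- (invmx E *m (D *m W *m D^T))).

(* reduced system: hat E xhat' = - hat L xhat + beta hat F u, yhat = alpha hat H xhat,
   with hat L = hat D hat W hat D^T, hat F = Pi^T F, hat H = H Pi *)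
Definition Sigma_hat_tf (n r mh p q : nat) (Pi : 'M[R]_(n, r))
  (Dh : 'M[R]_(r, mh)) (Wh : 'M[R]_mh) (Eh : 'M[R]_r)
  (F : 'M[R]_(n, p)) (H : 'M[R]_(q, n)) (alpha beta : R) : C -> 'M[C]_(q, p) :=
  tf (- (invmx Eh *m (Dh *m Wh *m Dh^T))) (beta *: (invmx Eh *m (Pi^T *m F)))
     (alpha *: (H *m Pi)).

Definition Sigma_hat_dom (r mh : nat) (Dh : 'M[R]_(r, mh)) (Wh : 'M[R]_mh)
  (Eh : 'M[R]_r) : C -> bool :=
  tf_dom (- (invmx Eh *m (Dh *m Wh *m Dh^T))).

End Defs.

(* With A = E^-1 L the full system is H (s + A)^-1 E^-1 F.  Since A 1 = 0 and
   1^T E A = 0, the matrix P = 1 1^T E / tr E projects onto ker A along the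
   range of A, so (s + A)^-1 = P / s + (1 - P) (s + A + P)^-1.  If
   v (s + A + P) = 0 with Re s >= 0, then v 1 = 0 because (A + P) 1 = 1, so
   v P = 0 and y = v E^-1 satisfies y (s E + L) y^* = 0; as E and L are
   positive semidefinite this forces y D = 0, so y is constant (the graph is
   connected) and v 1 = y E 1 = 0 makes it zero.  Hence the only pole in the
   closed right half-plane is s = 0, with residue H 1 1^T F / tr E.  The
   reduced system has the same structure and, since Pi 1 = 1, its residue is
   alpha beta H 1 1^T F / tr Ehat; the choice of alpha beta makes the two
   residues cancel. *)

From mathcomp Require Import all_boot all_order all_algebra.
From mathcomp Require Import reals ring.
From mathcomp.real_closed Require Import complex.
Import Order.TTheory GRing.Theory Num.Theory.
Set Implicit Arguments. Unset Strict Implicit. Unset Printing Implicit Defensive.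
Local Open Scope ring_scope.
Local Open Scope complex_scope.

Section ComplexMatrix.
Variable R : realType.

Lemma cmxE a b (A : 'M[R]_(a, b)) : cmx A = map_mx (real_complex R) A.
Proof. by []. Qed.

Lemma cmx0 a b : cmx (0 : 'M[R]_(a, b)) = 0.
Proof. by rewrite cmxE map_mx0. Qed.

Lemma cmxD a b (A B : 'M[R]_(a, b)) : cmx (A + B) = cmx A + cmx B.
Proof. by rewrite !cmxE map_mxD. Qed.

Lemma cmxN a b (A : 'M[R]_(a, b)) : cmx (- A) = - cmx A.
Proof. by rewrite !cmxE map_mxN. Qed.

Lemma cmxZ a b x (A : 'M[R]_(a, b)) : cmx (x *: A) = x%:C *: cmx A.
Proof. by rewrite !cmxE map_mxZ. Qed.

Lemma cmxM a b c (A : 'M[R]_(a, b)) (B : 'M[R]_(b, c)) :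
  cmx (A *m B) = cmx A *m cmx B.
Proof. by rewrite !cmxE map_mxM. Qed.

Lemma cmx1 a : cmx (1%:M : 'M[R]_a) = 1%:M.
Proof. by rewrite cmxE map_mx1. Qed.

Lemma cmxT a b (A : 'M[R]_(a, b)) : cmx A^T = (cmx A)^T.
Proof. by rewrite !cmxE map_trmx. Qed.

Lemma conj_cmx a b (A : 'M[R]_(a, b)) : map_mx conjc (cmx A) = cmx A.
Proof. by apply/matrixP=> i j; rewrite !mxE conjc_real. Qed.

Lemma tf_scale k p q (A : 'M[R]_k) (B : 'M[R]_(k, p)) (Cm : 'M[R]_(q, k)) x y s :
  tf A (y *: B) (x *: Cm) s = (x * y)%:C *: tf A B Cm s.
Proof. by rewrite /tf !cmxZ -!scalemxAl -scalemxAr scalerA rmorphM. Qed.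

End ComplexMatrix.

Section Regularity.
Variables (R : realType) (p q : nat).
Local Notation C := R[i].
Implicit Types (dom : C -> bool) (G : C -> 'M[C]_(q, p)).

Lemma eq_regular_at dom G1 G2 s0 : (forall s, dom s -> G1 s = G2 s) ->
  regular_at dom G1 s0 -> regular_at dom G2 s0.
Proof.
move=> eqG regG i j; have [a [b [b_s0 Gab]]] := regG i j.
by exists a, b; split=> // s ds; rewrite -eqG ?Gab.
Qed.

Lemma regular_atB dom1 dom2 G1 G2 s0 :
  regular_at dom1 G1 s0 -> regular_at dom2 G2 s0 ->
  regular_at (fun s => dom1 s && dom2 s) (fun s => G1 s - G2 s) s0.
Proof.
move=> reg1 reg2 i j.
have [a1 [b1 [b1_s0 G1E]]] := reg1 i j; have [a2 [b2 [b2_s0 G2E]]] := reg2 i j.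
exists (a1 * b2 - a2 * b1), (b1 * b2); split; first by rewrite hornerM mulf_neq0.
move=> s /andP[d1 d2]; rewrite !mxE hornerD hornerN !hornerM -G1E // -G2E //.
ring.
Qed.

Lemma regular_atZ dom G (x : C) s0 :
  regular_at dom G s0 -> regular_at dom (fun s => x *: G s) s0.
Proof.
move=> regG i j; have [a [b [b_s0 Gab]]] := regG i j.
by exists (x *: a), b; split=> // s ds; rewrite mxE -mulrA Gab // hornerZ.
Qed.

Lemma horner_char_poly_mx k (B : 'M[C]_k) s :
  map_mx (horner_eval s) (char_poly_mx B) = s%:M - B.
Proof.
apply/matrixP=> i j; rewrite !mxE horner_evalE hornerD hornerN hornerC hornerMn.
by rewrite hornerX.
Qed.

Lemma horner_map_polyC a b (X : 'M[C]_(a, b)) s :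
  map_mx (horner_eval s) (map_mx polyC X) = X.
Proof. by apply/matrixP=> i j; rewrite !mxE horner_evalE hornerC. Qed.

Lemma regular_at_adj k (B : 'M[C]_k) (X : 'M[C]_(q, k)) (Y : 'M[C]_(k, p))
    dom G s0 :
  \det (s0%:M - B) != 0 ->
  (forall s, dom s -> \det (s%:M - B) *: G s = X *m \adj (s%:M - B) *m Y) ->
  regular_at dom G s0.
Proof.
have detE s : (char_poly B).[s] = \det (s%:M - B).
  by rewrite -horner_evalE -det_map_mx horner_char_poly_mx.
move=> det_s0 GE i j.
exists ((map_mx polyC X *m \adj (char_poly_mx B) *m map_mx polyC Y) i j).
exists (char_poly B); split=> [|s ds]; first by rewrite detE.
rewrite detE mulrC.
have := congr1 (fun M : 'M_(q, p) => M i j) (GE s ds); rewrite /= mxE => ->.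
transitivity (map_mx (horner_eval s)
  (map_mx polyC X *m \adj (char_poly_mx B) *m map_mx polyC Y) i j).
  by rewrite !map_mxM map_mx_adj horner_char_poly_mx !horner_map_polyC.
by rewrite mxE.
Qed.

End Regularity.

Lemma Re_ge0_mul_add_eq0 (C : numClosedFieldType) (s a b : C) :
  0 <= 'Re s -> 0 <= a -> 0 <= b -> s * a + b = 0 -> b = 0.
Proof.
move=> Re_s_ge0 a_ge0 b_ge0 /(congr1 (@Num.Theory.Re C)).
rewrite raddfD /= ReMr ?ger0_real // (Creal_ReP _ (ger0_real b_ge0)) raddf0.
by move/eqP; rewrite paddr_eq0 ?mulr_ge0 // => /andP[_ /eqP].
Qed.

Section PositiveDiagonal.
Variable R : realType.
Local Notation C := R[i].
Variables (k : nat) (X : 'M[R]_k).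
Hypothesis X_pd : posdiag X.
Implicit Type z : 'rV[C]_k.

Lemma posdiag_unitmx : X \in unitmx.
Proof.
have -> : X = diag_mx (\row_i X i i).
  apply/matrixP=> i j; rewrite !mxE.
  by case: eqVneq => [->|/(proj1 X_pd) ->]; rewrite ?mulr1n.
rewrite unitmxE det_diag unitfE gt_eqF // prodr_gt0 // => i _.
by rewrite mxE (proj2 X_pd).
Qed.

Lemma posdiag_tr_neq0 : (0 < k)%N -> \tr X != 0.
Proof.
move=> k_gt0; rewrite gt_eqF // /mxtrace (bigD1 (Ordinal k_gt0)) //=.
by rewrite ltr_pwDl ?(proj2 X_pd) // sumr_ge0 // => i _; exact/ltW/(proj2 X_pd).
Qed.

Lemma const_mul_posdiag_const a b :
  const_mx 1 *m X *m const_mx 1 = \tr X *: const_mx 1 :> 'M_(a, b).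
Proof.
apply/matrixP=> i j; rewrite !mxE mulr1; apply: eq_bigr => l _.
rewrite !mxE mulr1 (bigD1 l) //= big1 ?addr0 ?mxE ?mul1r // => l' /(proj1 X_pd).
by rewrite mxE mul1r.
Qed.

Definition herm_form (z : 'rV[C]_k) : C := (z *m cmx X *m (map_mx conjc z)^T) 0 0.

Lemma herm_formE z : herm_form z = \sum_i (X i i)%:C * (z 0 i * (z 0 i)^*).
Proof.
rewrite /herm_form mxE; apply: eq_bigr => j _.
rewrite !mxE (bigD1 j) //= big1 ?addr0; last first.
  by move=> l /(proj1 X_pd) X0; rewrite !mxE X0 mulr0.
by rewrite mxE [z 0 j * _]mulrC mulrA.
Qed.

Lemma herm_form_term_ge0 z i : 0 <= (X i i)%:C * (z 0 i * (z 0 i)^*).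
Proof. by rewrite mulr_ge0 ?mulcJ_ge0 // ler0c ltW ?(proj2 X_pd). Qed.

Lemma herm_form_ge0 z : 0 <= herm_form z.
Proof. by rewrite herm_formE sumr_ge0 // => i _; apply: herm_form_term_ge0. Qed.

Lemma herm_form_eq0 z : herm_form z = 0 -> z = 0.
Proof.
rewrite herm_formE => /psumr_eq0P z0.
apply/matrixP=> i j; rewrite ord1 mxE.
have /eqP := z0 (fun l _ => herm_form_term_ge0 z l) j isT.
rewrite !mulf_eq0 conjc_eq0 orbb fmorph_eq0 gt_eqF ?(proj2 X_pd) //=.
by move/eqP.
Qed.

End PositiveDiagonal.

Definition residue_at0 (R : realType) k p q (E : 'M[R]_k) (F : 'M[R]_(k, p))
  (H : 'M[R]_(q, k)) : 'M[R]_(q, p) :=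
  (\tr E)^-1 *: (H *m const_mx 1 *m F).

Section DeflatedLaplacian.
Variable R : realType.
Local Notation C := R[i].
Variables (k m : nat) (D : 'M[R]_(k, m)) (W : 'M[R]_m) (E : 'M[R]_k).
Hypotheses (W_pd : posdiag W) (E_pd : posdiag E) (k_gt0 : (0 < k)%N).
Local Notation J := (const_mx 1 : 'M[R]_k).
Hypothesis const_D : J *m D = 0.
Hypothesis D_left_kernel :
  forall y : 'rV[C]_k, y *m cmx D = 0 -> forall i j, y 0 i = y 0 j.

Definition laplacian := D *m W *m D^T.
Definition scaled_laplacian := invmx E *m laplacian.
Definition mean_proj := (\tr E)^-1 *: (J *m E).
Definition deflated_laplacian := scaled_laplacian + mean_proj.

Local Notation A := scaled_laplacian.
Local Notation P := mean_proj.
Local Notation M := deflated_laplacian.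

Lemma laplacian_const : laplacian *m J = 0.
Proof.
by rewrite /laplacian -mulmxA -[J]trmx_const -trmx_mul const_D trmx0 mulmx0.
Qed.

Lemma const_laplacian : J *m laplacian = 0.
Proof. by rewrite /laplacian !mulmxA const_D !mul0mx. Qed.

Lemma scaled_laplacian_mean_proj : A *m P = 0.
Proof.
rewrite /P -scalemxAr mulmxA -(mulmxA _ _ J) laplacian_const.
by rewrite mulmx0 !mul0mx scaler0.
Qed.

Lemma mean_proj_scaled_laplacian : P *m A = 0.
Proof.
rewrite /P -scalemxAl -!mulmxA (mulmxA E) mulmxV ?posdiag_unitmx // mul1mx.
by rewrite const_laplacian scaler0.
Qed.

Lemma mean_proj_const : P *m J = J.
Proof.
rewrite /P -scalemxAl const_mul_posdiag_const // scalerA.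
by rewrite mulVf ?posdiag_tr_neq0 ?scale1r.
Qed.

Lemma mean_proj_idem : P *m P = P.
Proof. by rewrite {2}/P -scalemxAr mulmxA mean_proj_const. Qed.

Lemma mean_proj_invE : P *m invmx E = (\tr E)^-1 *: J.
Proof. by rewrite /P -scalemxAl -mulmxA mulmxV ?posdiag_unitmx ?mulmx1. Qed.

Lemma deflated_laplacian_const : M *m J = J.
Proof.
by rewrite mulmxDl mean_proj_const /A -mulmxA laplacian_const mulmx0 add0r.
Qed.

Lemma laplacian_left_kernel (s : C) (y : 'rV[C]_k) : 0 <= 'Re s ->
  y *m (s *: cmx E + cmx laplacian) = 0 -> y *m cmx D = 0.
Proof.
move=> Re_s_ge0 y0; set z := y *m cmx D; apply: (herm_form_eq0 W_pd).
apply: (Re_ge0_mul_add_eq0 Re_s_ge0 (herm_form_ge0 E_pd y)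
                           (herm_form_ge0 W_pd z)).
transitivity ((y *m (s *: cmx E + cmx laplacian) *m (map_mx conjc y)^T) 0 0).
  rewrite mulmxDr mulmxDl -scalemxAr -scalemxAl [RHS]mxE [X in _ = X + _]mxE.
  congr (_ + _); rewrite /herm_form /z /laplacian !cmxM cmxT map_mxM.
  by rewrite conj_cmx trmx_mul !mulmxA.
by rewrite y0 mul0mx mxE.
Qed.

Lemma scaled_laplacian_left_kernel (s : C) (v : 'rV[C]_k) : 0 <= 'Re s ->
  v *m (s%:M + cmx A) = 0 -> exists w : C, v = w *: cmx (const_mx 1 *m E).
Proof.
move=> Re_s_ge0 v0; set y := v *m cmx (invmx E).
have vE : v = y *m cmx E.
  by rewrite /y -mulmxA -cmxM mulVmx ?posdiag_unitmx // cmx1 mulmx1.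
have yD : y *m cmx D = 0.
  apply: (laplacian_left_kernel Re_s_ge0).
  rewrite mulmxDr -scalemxAr -vE -[RHS]v0 mulmxDr mul_mx_scalar.
  by rewrite [cmx A]cmxM mulmxA.
clearbody y; exists (y 0 (Ordinal k_gt0)).
rewrite vE cmxM scalemxAl; congr (_ *m _).
apply/matrixP=> i j; rewrite ord1 !mxE rmorph1 mulr1.
exact: D_left_kernel yD j (Ordinal k_gt0).
Qed.

Lemma deflated_laplacian_unitmx (s : C) : 0 <= 'Re s -> s%:M + cmx M \in unitmx.
Proof.
move=> Re_s_ge0; rewrite unitmxE unitfE; apply/negP => /det0P [v v_neq0 v0].
have vJ : v *m cmx J = 0.
  have := congr1 (mulmx^~ (cmx J)) v0; rewrite /= mul0mx -mulmxA mulmxDl.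
  rewrite mul_scalar_mx -cmxM deflated_laplacian_const -{2}[cmx J]scale1r.
  rewrite -scalerDl -scalemxAr => /eqP; rewrite scaler_eq0 addr_eq0.
  case/orP=> [/eqP s_N1 | /eqP //]; move: Re_s_ge0.
  by rewrite s_N1 raddfN /= (Creal_ReP _ (rpred1 _)) oppr_ge0 ler10.
have vP : v *m cmx P = 0.
  by rewrite /P cmxZ cmxM -scalemxAr mulmxA vJ mul0mx scaler0.
have [w vw] : exists w : C, v = w *: cmx (const_mx 1 *m E).
  apply: (scaled_laplacian_left_kernel Re_s_ge0).
  by rewrite -[RHS]v0 cmxD addrA [in RHS]mulmxDr vP addr0.
move: vJ; rewrite vw -scalemxAl -cmxM const_mul_posdiag_const // cmxZ scalerA.
move/matrixP/(_ 0 (Ordinal k_gt0)); rewrite !mxE rmorph1 mulr1 => /eqP.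
rewrite mulf_eq0 fmorph_eq0 (negbTE (posdiag_tr_neq0 E_pd k_gt0)) orbF => /eqP w0.
by move: v_neq0; rewrite vw w0 scale0r eqxx.
Qed.

Lemma scaled_laplacian_singular : cmx A \notin unitmx.
Proof.
apply/negP => A_unit; have := mulKmx A_unit (cmx J).
rewrite -cmxM -mulmxA laplacian_const mulmx0 cmx0 mulmx0.
move/matrixP/(_ (Ordinal k_gt0) (Ordinal k_gt0)); rewrite !mxE rmorph1.
by move/eqP; rewrite eq_sym oner_eq0.
Qed.

(* [P] commutes with [s + A], which acts as [s] on the range of [P] and as
   [s + M] on its kernel. *)
Lemma resolvent_decomp (s : C) : s%:M + cmx A \in unitmx ->
  \det (s%:M + cmx M) *: invmx (s%:M + cmx A) =
    (\det (s%:M + cmx M) / s) *: cmx P + (1%:M - cmx P) *m \adj (s%:M + cmx M).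
Proof.
move=> U_unit; set U := s%:M + cmx A; set N := s%:M + cmx M; set Pc := cmx P.
have s_neq0 : s != 0.
  apply: contraTneq U_unit => ->.
  by rewrite /U raddf0 add0r scaled_laplacian_singular.
have PcPc : Pc *m Pc = Pc by rewrite -cmxM mean_proj_idem.
have UPc : U *m Pc = s *: Pc.
  by rewrite mulmxDl mul_scalar_mx -cmxM scaled_laplacian_mean_proj cmx0 addr0.
have NE : N = U + Pc by rewrite /N cmxD addrA.
have PcN : Pc *m N = s *: Pc + Pc.
  rewrite NE /U !mulmxDr mul_mx_scalar -cmxM mean_proj_scaled_laplacian cmx0.
  by rewrite addr0 PcPc.
have U_compl : U *m (1%:M - Pc) = (1%:M - Pc) *m N.
  by rewrite mulmxBr mulmx1 UPc mulmxBl mul1mx PcN NE opprD addrACA subrr addr0.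
have invU_Pc : invmx U *m Pc = s^-1 *: Pc.
  have := mulKmx U_unit Pc; rewrite UPc -scalemxAr => {2}<-.
  by rewrite scalerA mulVf // scale1r.
have adjE : (1%:M - Pc) *m \adj N = \det N *: (invmx U *m (1%:M - Pc)).
  have := mulKmx U_unit (1%:M - Pc); rewrite U_compl => {1}<-.
  by rewrite -!mulmxA mul_mx_adj mul_mx_scalar -scalemxAr.
by rewrite adjE -scalerA -invU_Pc -scalerDr -mulmxDr addrC subrK mulmx1.
Qed.

Definition tf_minus_residue p q (F : 'M[R]_(k, p)) (H : 'M[R]_(q, k)) (s : C) :=
  tf (- A) (invmx E *m F) H s - s^-1 *: cmx (residue_at0 E F H).

Lemma tf_minus_residue_decomp p q (F : 'M[R]_(k, p)) (H : 'M[R]_(q, k)) s :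
  tf_dom (- A) s ->
  \det (s%:M + cmx M) *: tf_minus_residue F H s =
  cmx H *m (1%:M - cmx P) *m \adj (s%:M + cmx M) *m cmx (invmx E *m F).
Proof.
rewrite /tf_dom /tf_minus_residue /tf cmxN opprK => U_unit.
have -> : residue_at0 E F H = H *m P *m (invmx E *m F).
  by rewrite (mulmxA _ _ F) -(mulmxA H) mean_proj_invE -scalemxAr -scalemxAl.
rewrite (cmxM (H *m P)) (cmxM H P) -(mulmxA (cmx H) (1%:M - _)).
set Q := (1%:M - cmx P) *m _.
rewrite scalerBr scalerA scalemxAl scalemxAr resolvent_decomp // -/Q.
by rewrite mulmxDr mulmxDl -scalemxAr -scalemxAl addrAC subrr add0r.
Qed.

Lemma tf_minus_residue_regular p q (F : 'M[R]_(k, p)) (H : 'M[R]_(q, k)) s0 :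
  0 <= 'Re s0 -> regular_at (tf_dom (- A)) (tf_minus_residue F H) s0.
Proof.
move=> Re_s0_ge0.
apply: (@regular_at_adj _ _ _ _ (- cmx M)) => [|s ds]; rewrite opprK.
  by rewrite -unitfE -unitmxE deflated_laplacian_unitmx.
exact: tf_minus_residue_decomp.
Qed.

End DeflatedLaplacian.

Lemma connected_const n m (e : 'I_m -> 'I_n * 'I_n) T (f : 'I_n -> T) :
  connected_graph e -> (forall l, f (e l).1 = f (e l).2) -> forall i j, f i = f j.
Proof.
move=> e_conn f_edge i j; have /connectP [p ij_path ->] := e_conn i j.
elim: p i ij_path => //= a p IHp i /andP [/existsP [l /orP [] /eqP el] /IHp <-];
  by have := f_edge l; rewrite el.
Qed.

Section Incidence.
Variables (R : realType) (n m : nat) (e : 'I_m -> 'I_n * 'I_n).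
Hypothesis loopless : forall l, (e l).1 != (e l).2.
Local Notation D := (incidence R e).

Lemma const_incidence a : const_mx 1 *m D = 0 :> 'M_(a, m).
Proof.
apply/matrixP=> i l; have ne := loopless l.
rewrite !mxE (bigD1 (e l).1) //= (bigD1 (e l).2) 1?eq_sym //= big1 ?addr0.
  by rewrite !mxE eqxx eq_sym (negbTE ne) eqxx !mul1r subrr.
by move=> j /andP[j2 j1]; rewrite !mxE (negbTE j1) (negbTE j2) mulr0.
Qed.

Lemma row_mul_incidence (y : 'rV[R[i]]_n) l :
  (y *m cmx D) 0 l = y 0 (e l).1 - y 0 (e l).2.
Proof.
have ne := loopless l.
rewrite mxE (bigD1 (e l).1) //= (bigD1 (e l).2) 1?eq_sym //= big1 ?addr0.
  by rewrite !mxE eqxx eq_sym (negbTE ne) eqxx rmorphN rmorph1 mulr1 mulrN1.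
by move=> j /andP[j2 j1]; rewrite !mxE (negbTE j1) (negbTE j2) rmorph0 mulr0.
Qed.

Lemma incidence_left_kernel : connected_graph e ->
  forall y : 'rV[R[i]]_n, y *m cmx D = 0 -> forall i j, y 0 i = y 0 j.
Proof.
move=> e_conn y yD; apply: (connected_const (f := fun i => y 0 i) e_conn) => l.
by apply/eqP; rewrite -subr_eq0 -row_mul_incidence yD mxE.
Qed.

End Incidence.

Lemma mulmx_col_eq (K : pzRingType) a b c c' (A : 'M[K]_(a, b)) (B : 'M_(b, c))
    (B' : 'M_(b, c')) l l' :
  col l B = col l' B' -> forall i, (A *m B) i l = (A *m B') i l'.
Proof.
move=> Bl i; rewrite !mxE; apply: eq_bigr => j _.
by have := congr1 (fun v : 'cV_b => v j 0) Bl; rewrite !mxE => ->.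
Qed.

Section ReducedIncidence.
Variables (R : realType) (n r m : nat) (Pi : 'M[R]_(n, r)) (D : 'M[R]_(n, m)).
Local Notation X := (Pi^T *m D).
Local Notation Dh := (red_incidence Pi D).

Lemma col_red_incidence k : col k Dh = nth 0 (red_cols Pi D) k.
Proof. by apply/matrixP=> i j; rewrite !mxE (ord1 j). Qed.

Lemma red_incidence_col k : exists l, col k Dh = col l X.
Proof.
have := mem_nth 0 (ltn_ord k); rewrite mem_undup => /mapP [l _ kl].
by exists l; rewrite col_red_incidence kl.
Qed.

Lemma col_red_incidenceP l : col l X != 0 -> exists k, col l X = col k Dh.
Proof.
move=> Xl_neq0; have Xl_red : col l X \in red_cols Pi D.
  rewrite mem_undup; apply/mapP; exists l => //.
  by rewrite mem_filter Xl_neq0 mem_enum.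
have k_lt : (index (col l X) (red_cols Pi D) < size (red_cols Pi D))%N.
  by rewrite index_mem.
by exists (Ordinal k_lt); rewrite col_red_incidence nth_index.
Qed.

Lemma mul_red_incidence_eq0 a (Y : 'M[R]_(a, r)) : Y *m X = 0 -> Y *m Dh = 0.
Proof.
move=> YX; apply/matrixP=> i k; have [l /mulmx_col_eq ->] := red_incidence_col k.
by rewrite YX !mxE.
Qed.

Lemma cmx_mul_red_incidence_eq0 a (Y : 'M[R[i]]_(a, r)) :
  Y *m cmx Dh = 0 -> Y *m cmx X = 0.
Proof.
move=> YDh; apply/matrixP=> i l; rewrite [RHS]mxE.
have [Xl0 | /col_red_incidenceP [k Xl]] := eqVneq (col l X) 0.
  have cXl : col l (cmx X) = col l (cmx (0 : 'M_(r, m))).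
    by rewrite !cmxE -!map_col Xl0 col0.
  by rewrite (mulmx_col_eq _ cXl) cmx0 mulmx0 mxE.
have cXl : col l (cmx X) = col k (cmx Dh) by rewrite !cmxE -!map_col Xl.
by rewrite (mulmx_col_eq _ cXl) YDh mxE.
Qed.

End ReducedIncidence.

Section Clustering.
Variables (R : realType) (n m r : nat).
Variables (e : 'I_m -> 'I_n * 'I_n) (c : 'I_n -> 'I_r).
Hypothesis loopless : forall l, (e l).1 != (e l).2.
Local Notation D := (incidence R e).
Local Notation Pi := (char_mx R c).
Local Notation Dh := (red_incidence Pi D).

Lemma char_mx_const a : Pi *m const_mx 1 = const_mx 1 :> 'M_(n, a).
Proof.
apply/matrixP=> i j; rewrite !mxE (bigD1 (c i)) //= big1 ?addr0.
  by rewrite !mxE eqxx mulr1.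
by move=> k /negbTE ck; rewrite !mxE eq_sym ck mul0r.
Qed.

Lemma char_mx_const_trmx : Pi *m const_mx 1 *m Pi^T = const_mx 1 :> 'M_n.
Proof.
rewrite char_mx_const -[LHS]trmxK trmx_mul trmxK trmx_const char_mx_const.
by rewrite trmx_const.
Qed.

Lemma const_red_incidence : (const_mx 1 : 'M_r) *m Dh = 0.
Proof.
apply: mul_red_incidence_eq0.
rewrite mulmxA -[const_mx 1 *m _]trmxK trmx_mul trmxK trmx_const char_mx_const.
by rewrite trmx_const const_incidence.
Qed.

Lemma red_incidence_left_kernel : connected_graph e -> clustering c ->
  forall y : 'rV[R[i]]_r, y *m cmx Dh = 0 -> forall a b, y 0 a = y 0 b.
Proof.
move=> e_conn c_onto y /cmx_mul_red_incidence_eq0 yX.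
set z := y *m cmx Pi^T.
have zE i : z 0 i = y 0 (c i).
  rewrite mxE (bigD1 (c i)) //= big1 ?addr0 => [|k /negbTE ck].
    by rewrite !mxE eqxx mulr1.
  by rewrite !mxE eq_sym ck mulr0.
have zD : z *m cmx D = 0 by rewrite /z -mulmxA -cmxM.
move=> a b; have [i <-] := c_onto a; have [j <-] := c_onto b.
by rewrite -!zE (incidence_left_kernel loopless e_conn zD i j).
Qed.

End Clustering.

Close Scope complex_scope.
Unset Implicit Arguments.
Set Strict Implicit.

Theorem lemma1 (R : realType) (n m : nat) (e : 'I_m -> 'I_n * 'I_n)
  (Hsimple : simple_graph e) (Hconn : connected_graph e)
  (W : 'M[R]_m) (HW : posdiag W) (E : 'M[R]_n) (HE : posdiag E)
  (p q : nat) (F : 'M[R]_(n, p)) (H : 'M[R]_(q, n))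
  (r : nat) (c : 'I_n -> 'I_r) (Hc : clustering c)
  (alpha beta : R) :
  let D := incidence R e in
  let Pi := char_mx R c in
  let Dh := red_incidence Pi D in
  forall (Wh : 'M[R]_(size (red_cols Pi D))) (Eh : 'M[R]_r),
    posdiag Wh -> posdiag Eh ->
    alpha * beta = \tr Eh / \tr E ->
    BIBO_stable
      (fun s => Sigma_dom D W E s && Sigma_hat_dom Dh Wh Eh s)
      (fun s => Sigma_tf D W E F H s - Sigma_hat_tf Pi Dh Wh Eh F H alpha beta s).
Proof.
move=> D Pi Dh Wh Eh HWh HEh ab s0 s0_pole.
rewrite real_ltNge ?Creal_Re //; apply/negP => Re_s0_ge0; apply: s0_pole.
have [n0 | n_gt0] := posnP n.
  have H0 : H = 0.
    apply/matrixP=> i j; suff : (j < 0)%N by rewrite ltn0.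
    by rewrite -n0.
  move=> i j; exists 0, 1; split=> [|s _]; first by rewrite hornerC oner_eq0.
  rewrite /Sigma_tf /Sigma_hat_tf /tf H0 mul0mx scaler0 !cmx0 !mul0mx subrr.
  by rewrite mxE hornerC horner0 mulr1.
have r_gt0 : (0 < r)%N := leq_ltn_trans (leq0n _) (ltn_ord (c (Ordinal n_gt0))).
have loopless := proj1 Hsimple.
have trE_inv : (\tr E)^-1 = alpha * beta * (\tr Eh)^-1.
  by rewrite ab mulrAC divff ?mul1r ?posdiag_tr_neq0.
have res_eq : residue_at0 E F H =
              (alpha * beta) *: residue_at0 Eh (Pi^T *m F) (H *m Pi).
  by rewrite /residue_at0 scalerA -trE_inv -(char_mx_const_trmx R c) !mulmxA.
apply: (eq_regular_at (G1 := fun s => tf_minus_residue D W E F H s -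
  ((alpha * beta)%:C)%C *: tf_minus_residue Dh Wh Eh (Pi^T *m F) (H *m Pi) s)).
  move=> s _; rewrite /tf_minus_residue /Sigma_hat_tf tf_scale res_eq cmxZ.
  by rewrite scalerBr !scalerA mulrC opprB addrA subrK.
apply: regular_atB; last apply: regular_atZ.
all: apply: tf_minus_residue_regular => //.
- exact: const_incidence.
- exact: incidence_left_kernel.
- exact: const_red_incidence.
- exact: red_incidence_left_kernel.
Qed.
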